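(* Let $N$ be a central graded ideal of a Lie superalgebra $L$. Then $N\subseteq Z^{*}(L)$ if and only if the natural map $\sigma:\mathcal{M}(L)\to\mathcal{M}(L/N)$ is a monomorphism.
   Context: All algebras are over a field $\mathbb{F}$ of characteristic $\neq 2,3$. For a free presentation $0\to R\to F\to L\to 0$ ($F$ free Lie superalgebra, $R$ graded ideal), the Schur multiplier is $\mathcal{M}(L)=(R\cap F')/[R,F]$; writing $N=S/R$ for a graded ideal $S\supseteq R$ of $F$, $\mathcal{M}(L/N)=(S\cap F')/[S,F]$ and $\sigma(x+[R,F])=x+[S,F]$. A Lie superalgebra is capable if it is isomorphic to $H/Z(H)$ for some Lie superalgebra $H$; the epicenter $Z^{*}(L)$ is the smallest graded ideal $I$ of $L$ with $L/I$ capable. *)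

From HB Require Import structures.
From mathcomp Require Import all_boot all_order all_algebra.
Set Implicit Arguments. Unset Strict Implicit. Unset Printing Implicit Defensive.
Import GRing.Theory.
Local Open Scope ring_scope.

(* sign (-1)^(p q) for parities p q (false = even, true = odd) *)
Definition psign (F : fieldType) (p q : bool) : F := if p && q then -1 else 1.

(* A Lie superalgebra: a vector space L = L_0 (+) L_1 with a bilinear bracket
   satisfying grading, super-antisymmetry and the super-Jacobi identity.
   [lsa_hom b x] means x is homogeneous of parity b (false = even, true = odd). *)
Record lieSuperAlg (F : fieldType) := LieSuperAlg {
  lsa_car :> lmodType F;
  lsa_br : lsa_car -> lsa_car -> lsa_car;
  lsa_hom : bool -> lsa_car -> Prop;
  lsa_hom0 : forall b, lsa_hom b 0;
  lsa_homD : forall b x y, lsa_hom b x -> lsa_hom b y -> lsa_hom b (x + y);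
  lsa_homZ : forall b (a : F) x, lsa_hom b x -> lsa_hom b (a *: x);
  lsa_decomp : forall x, exists x0 x1, lsa_hom false x0 /\ lsa_hom true x1 /\ x = x0 + x1;
  lsa_disj : forall x, lsa_hom false x -> lsa_hom true x -> x = 0;
  lsa_brDl : forall (a : F) x y z, lsa_br (a *: x + y) z = a *: lsa_br x z + lsa_br y z;
  lsa_brDr : forall (a : F) x y z, lsa_br x (a *: y + z) = a *: lsa_br x y + lsa_br x z;
  lsa_br_hom : forall p q x y, lsa_hom p x -> lsa_hom q y -> lsa_hom (addb p q) (lsa_br x y);
  lsa_antisym : forall p q x y, lsa_hom p x -> lsa_hom q y ->
      lsa_br x y = - (psign F p q *: lsa_br y x);
  lsa_jacobi : forall p q r x y z, lsa_hom p x -> lsa_hom q y -> lsa_hom r z ->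
      psign F p r *: lsa_br x (lsa_br y z) + psign F q p *: lsa_br y (lsa_br z x)
      + psign F r q *: lsa_br z (lsa_br x y) = 0
}.

Arguments lsa_br {F} l _ _ : rename.
Arguments lsa_hom {F} l _ _ : rename.

Section Defs.
Variable F : fieldType.

Definition subspace (L : lieSuperAlg F) (V : L -> Prop) : Prop :=
  V 0 /\ (forall x y, V x -> V y -> V (x + y)) /\ (forall (a : F) x, V x -> V (a *: x)).

Definition graded (L : lieSuperAlg F) (V : L -> Prop) : Prop :=
  forall x, V x -> exists x0 x1, V x0 /\ lsa_hom L false x0 /\ V x1 /\ lsa_hom L true x1
                                 /\ x = x0 + x1.

Definition graded_ideal (L : lieSuperAlg F) (I : L -> Prop) : Prop :=
  subspace I /\ graded I /\ (forall x y, I y -> I (lsa_br L x y)).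

Definition center (L : lieSuperAlg F) (z : L) : Prop := forall x, lsa_br L z x = 0.

Definition is_hom (L K : lieSuperAlg F) (f : L -> K) : Prop :=
  (forall x y, f (x + y) = f x + f y) /\
  (forall (a : F) x, f (a *: x) = a *: f x) /\
  (forall x y, f (lsa_br L x y) = lsa_br K (f x) (f y)) /\
  (forall b x, lsa_hom L b x -> lsa_hom K b (f x)).

Definition surj (L K : lieSuperAlg F) (f : L -> K) : Prop := forall y, exists x, f x = y.

(* L is capable: L is isomorphic to H / Z(H) for some H, i.e. there is a
   surjective homomorphism H -> L with kernel Z(H). *)
Definition capable (L : lieSuperAlg F) : Prop :=
  exists (H : lieSuperAlg F) (f : H -> L),
    is_hom f /\ surj f /\ (forall h, f h = 0 <-> center h).

(* L / I is capable: some (equivalently every) quotient of L by I,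
   i.e. a Q with a surjective homomorphism L -> Q of kernel I, is capable. *)
Definition quotient_capable (L : lieSuperAlg F) (I : L -> Prop) : Prop :=
  exists (Q : lieSuperAlg F) (p : L -> Q),
    is_hom p /\ surj p /\ (forall x, p x = 0 <-> I x) /\ capable Q.

(* membership in the epicenter Z^*(L): the smallest graded ideal I with L/I capable,
   i.e. the intersection of all such graded ideals. *)
Definition epicenter (L : lieSuperAlg F) (x : L) : Prop :=
  forall I : L -> Prop, graded_ideal I -> quotient_capable I -> I x.

Definition is_free_on (Fr : lieSuperAlg F) (X : Type) (par : X -> bool) (i : X -> Fr) : Prop :=
  (forall x, lsa_hom Fr (par x) (i x)) /\
  forall (K : lieSuperAlg F) (g : X -> K), (forall x, lsa_hom K (par x) (g x)) ->
    exists phi : Fr -> K, is_hom phi /\ (forall x, phi (i x) = g x) /\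
      forall psi : Fr -> K, is_hom psi -> (forall x, psi (i x) = g x) -> forall y, psi y = phi y.

Definition brspan (L : lieSuperAlg F) (A B : L -> Prop) (x : L) : Prop :=
  forall V : L -> Prop, subspace V -> (forall a b, A a -> B b -> V (lsa_br L a b)) -> V x.

(* injectivity of sigma : (R cap F')/[R,F] -> (S cap F')/[S,F],  x+[R,F] |-> x+[S,F] *)
Definition schur_sigma_injective (Fr : lieSuperAlg F) (R S : Fr -> Prop) : Prop :=
  let Fr' := brspan (fun _ => True) (fun _ => True) in
  forall x y, R x -> Fr' x -> R y -> Fr' y ->
    brspan S (fun _ => True) (x - y) -> brspan R (fun _ => True) (x - y).

End Defs.

From HB Require Import structures.
From mathcomp Require Import all_boot all_order all_algebra.
From mathcomp Require Import boolp.
Set Implicit Arguments. Unset Strict Implicit. Unset Printing Implicit Defensive.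
Import GRing.Theory.
Local Open Scope ring_scope.
Local Open Scope quotient_scope.

(* Write R = ker pi, S = pi^-1(N) and H = Fr / [R, Fr].  As N is central,
   [S, Fr] <= R /\ [Fr, Fr], so sigma is injective exactly when [S, Fr] <= [R, Fr];
   it thus suffices that pi s lies in Z*(L) iff s + [R, Fr] is central in H.
   Since R / [R, Fr] is central, Fr -> H -> H / Z(H) factors through pi, so L maps onto
   the capable algebra H / Z(H) and Z*(L) lies in the kernel: one direction.
   Conversely, if L / I is isomorphic to H' / Z(H'), freeness of Fr lifts Fr -> L / I
   to phi : Fr -> H'.  Then phi(R) <= Z(H'), so phi kills [R, Fr], and
   H' = phi(Fr) + Z(H'), so phi(s) is central once [s, Fr] <= [R, Fr]; hence pi s is in I. *)

Lemma psign_sqr (F : fieldType) p q : psign F p q ^+ 2 = 1.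
Proof. by rewrite /psign; case: (p && q); rewrite ?sqrrN expr1n. Qed.

Section LieSuperAlgebra.
Variables (F : fieldType) (L : lieSuperAlg F).
Local Notation br := (lsa_br L).
Local Notation hom := (lsa_hom L).
Local Notation full := (fun _ : L => True).

Lemma subspaceN (V : L -> Prop) x : subspace V -> V x -> V (- x).
Proof. by case=> _ [_ VZ] /(VZ (-1)); rewrite scaleN1r. Qed.

Lemma subspaceB (V : L -> Prop) x y : subspace V -> V x -> V y -> V (x - y).
Proof. by move=> hV Vx Vy; case: (hV) => _ [VD _]; apply: (VD) => //; apply: subspaceN. Qed.

Lemma lsa_br0l z : br 0 z = 0.
Proof.
have := lsa_brDl 1 0 0 z; rewrite scaler0 addr0 scale1r -{1}[br 0 z]addr0.
by move/addrI/esym.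
Qed.

Lemma lsa_br0r x : br x 0 = 0.
Proof.
have := lsa_brDr 1 x 0 0; rewrite scaler0 addr0 scale1r -{1}[br x 0]addr0.
by move/addrI/esym.
Qed.

Lemma lsa_br_addl x y z : br (x + y) z = br x z + br y z.
Proof. by have := lsa_brDl 1 x y z; rewrite !scale1r. Qed.

Lemma lsa_br_addr x y z : br x (y + z) = br x y + br x z.
Proof. by have := lsa_brDr 1 x y z; rewrite !scale1r. Qed.

Lemma lsa_br_scalel a x z : br (a *: x) z = a *: br x z.
Proof. by have := lsa_brDl a x 0 z; rewrite !addr0 lsa_br0l addr0. Qed.

Lemma lsa_br_scaler a x z : br x (a *: z) = a *: br x z.
Proof. by have := lsa_brDr a x z 0; rewrite !addr0 lsa_br0r addr0. Qed.

Lemma lsa_br_subl x y z : br (x - y) z = br x z - br y z.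
Proof. by rewrite lsa_br_addl -scaleN1r lsa_br_scalel scaleN1r. Qed.

Lemma lsa_br_subr x y z : br x (y - z) = br x y - br x z.
Proof. by rewrite lsa_br_addr -scaleN1r lsa_br_scaler scaleN1r. Qed.

Lemma lsa_homN b x : hom b x -> hom b (- x).
Proof. by move/(lsa_homZ (-1)); rewrite scaleN1r. Qed.

Lemma lsa_homB b x y : hom b x -> hom b y -> hom b (x - y).
Proof. by move=> hx hy; apply: lsa_homD => //; apply: lsa_homN. Qed.

Lemma lsa_decomp_parity b x : exists xb xc, hom b xb /\ hom (~~ b) xc /\ x = xb + xc.
Proof.
have [x0 [x1 [h0 [h1 ->]]]] := lsa_decomp x.
by case: b; [exists x1, x0; rewrite addrC | exists x0, x1].
Qed.

Lemma lsa_hom_add_eq0 p q a c : p != q -> hom p a -> hom q c -> a + c = 0 ->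
  a = 0 /\ c = 0.
Proof.
move=> pq ha hc /eqP; rewrite addr_eq0 => /eqP ea.
have a0 : a = 0.
  have hqa : hom q a by rewrite ea; apply: lsa_homN.
  by clear hc; case: p q pq ha hqa => [] [] // _ h1 h2; apply: lsa_disj.
by split=> //; apply/eqP; rewrite -oppr_eq0 -ea a0.
Qed.

Definition graded_hull (V : L -> Prop) (x : L) : Prop :=
  exists x0 x1, V x0 /\ hom false x0 /\ V x1 /\ hom true x1 /\ x = x0 + x1.

Lemma graded_hull_subspace V : subspace V -> subspace (graded_hull V).
Proof.
case=> V0 [VD VZ]; split.
  by exists 0, 0; rewrite addr0; do !split=> //; apply: lsa_hom0.
split=> [x y [x0 [x1 [? [? [? [? ->]]]]]] [y0 [y1 [? [? [? [? ->]]]]]] |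
         a x [x0 [x1 [? [? [? [? ->]]]]]]].
  exists (x0 + y0), (x1 + y1); rewrite addrACA.
  by do !split=> //; [apply: (VD) | apply: lsa_homD | apply: (VD) | apply: lsa_homD].
exists (a *: x0), (a *: x1); rewrite scalerDr.
by do !split=> //; [apply: (VZ) | apply: lsa_homZ | apply: (VZ) | apply: lsa_homZ].
Qed.

Lemma graded_hull_hom V b x : subspace V -> V x -> hom b x -> graded_hull V x.
Proof.
case=> V0 _ Vx hx; case: b hx => hx.
  by exists 0, x; rewrite add0r; do !split=> //; apply: lsa_hom0.
by exists x, 0; rewrite addr0; do !split=> //; apply: lsa_hom0.
Qed.

Lemma graded_full : graded full.
Proof. by move=> x _; have [x0 [x1 [? [? ->]]]] := lsa_decomp x; exists x0, x1. Qed.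

Lemma graded_br_ind (V A B : L -> Prop) : subspace V -> graded A -> graded B ->
  (forall p q a b, A a -> B b -> hom p a -> hom q b -> V (br a b)) ->
  forall a b, A a -> B b -> V (br a b).
Proof.
move=> [_ [VD _]] gA gB hV a b.
move=> /gA [a0 [a1 [? [? [? [? ->]]]]]] /gB [b0 [b1 [? [? [? [? ->]]]]]].
by rewrite !lsa_br_addl !lsa_br_addr; do !apply: (VD); apply: hV; eassumption.
Qed.

Lemma center_homogeneous z z0 z1 : center z -> hom false z0 -> hom true z1 ->
  z = z0 + z1 -> center z0 /\ center z1.
Proof.
move=> cz h0 h1 ez.
have cz_hom q y : hom q y -> br z0 y = 0 /\ br z1 y = 0.
  move=> hy; apply: (@lsa_hom_add_eq0 (addb false q) (addb true q)).
  - by case: q {hy}.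
  - exact: lsa_br_hom.
  - exact: lsa_br_hom.
  by rewrite -lsa_br_addl -ez cz.
suff cz_all y : br z0 y = 0 /\ br z1 y = 0 by split=> y; case: (cz_all y).
have [y0 [y1 [hy0 [hy1 ->]]]] := lsa_decomp y; rewrite !lsa_br_addr.
by have [-> ->] := cz_hom _ _ hy0; have [-> ->] := cz_hom _ _ hy1; rewrite addr0.
Qed.

Lemma center_subspace : subspace (@center F L).
Proof.
split; first exact: lsa_br0l.
split=> [x y cx cy z | a x cx z].
  by rewrite lsa_br_addl cx cy addr0.
by rewrite lsa_br_scalel cx scaler0.
Qed.

Lemma lsa_br_centerr x z : center z -> br x z = 0.
Proof.
move=> cz; have [z0 [z1 [h0 [h1 ez]]]] := lsa_decomp z.
have [cz0 cz1] := center_homogeneous cz h0 h1 ez.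
have brz p a : hom p a -> br a z = 0.
  move=> ha; rewrite ez lsa_br_addr (lsa_antisym ha h0) (lsa_antisym ha h1) cz0 cz1.
  by rewrite !scaler0 oppr0 addr0.
have [x0 [x1 [hx0 [hx1 ->]]]] := lsa_decomp x.
by rewrite lsa_br_addl (brz _ _ hx0) (brz _ _ hx1) addr0.
Qed.

Lemma center_graded_ideal : graded_ideal (@center F L).
Proof.
split; first exact: center_subspace.
split=> [z cz | x z cz y]; last by rewrite (lsa_br_centerr x cz) lsa_br0l.
have [z0 [z1 [h0 [h1 ez]]]] := lsa_decomp z.
by have [? ?] := center_homogeneous cz h0 h1 ez; exists z0, z1.
Qed.

Lemma graded_ideal_brl (J : L -> Prop) j y : graded_ideal J -> J j -> J (br j y).
Proof.
case=> hJ [gJ JI] Jj; apply: (graded_br_ind hJ gJ graded_full) => // p q a b Ja _ ha hb.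
by rewrite (lsa_antisym ha hb); apply: subspaceN => //; case: hJ => _ [_ JZ]; apply/JZ/JI.
Qed.

Lemma brspan_subspace (A B : L -> Prop) : subspace (brspan A B).
Proof.
split; first by move=> V [].
split=> [x y x_in y_in | a x x_in] V hV hAB; case: (hV) => _ [VD VZ].
  by apply: (VD); [apply: x_in | apply: y_in].
by apply: (VZ); apply: x_in.
Qed.

Lemma brspan_br (A B : L -> Prop) a b : A a -> B b -> brspan A B (br a b).
Proof. by move=> Aa Bb V _; apply. Qed.

Lemma brspan_ind (A B V : L -> Prop) : subspace V ->
  (forall a b, A a -> B b -> V (br a b)) -> forall x, brspan A B x -> V x.
Proof. by move=> hV hAB x; apply. Qed.

Lemma brspan_graded (R : L -> Prop) : graded R -> graded (brspan R full).
Proof.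
move=> gR; have hK := brspan_subspace R full.
apply: brspan_ind; first exact: graded_hull_subspace.
apply: (graded_br_ind (graded_hull_subspace hK) gR graded_full) => p q a b Ra _ ha hb.
by apply: (graded_hull_hom hK (brspan_br Ra (I : full b))); apply: lsa_br_hom ha hb.
Qed.

Section BracketIdeal.
Variable R : L -> Prop.
Hypothesis hR : graded_ideal R.
Local Notation K := (brspan R full).

Lemma brspan_ideal_hom p x y : hom p x -> K y -> K (br x y).
Proof.
move=> hx; have hK := brspan_subspace R full; have [_ [KD KZ]] := hK.
have hV : subspace (fun y => K (br x y)).
  split; first by rewrite lsa_br0r; case: hK.
  split=> [a b Ka Kb | c a Ka]; first by rewrite lsa_br_addr; apply: (KD).
  by rewrite lsa_br_scaler; apply: (KZ).
apply: (brspan_ind hV).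
apply: (graded_br_ind hV (proj1 (proj2 hR)) graded_full) => q s r g Rr _ hr hg.
(* super-Jacobi: [x, [r, g]] is a combination of [r, [g, x]] and [g, [x, r]], both in K *)
pose u := psign F q p *: br r (br g x) + psign F s q *: br g (br x r).
have Ku : K u.
  apply: (KD); apply: (KZ); first exact: brspan_br.
  rewrite (lsa_antisym hg (lsa_br_hom hx hr)); apply: (subspaceN hK).
  by apply: (KZ); apply: brspan_br => //; case: hR => _ [_ RI]; apply: RI.
have -> : br x (br r g) = psign F p s *: (- u).
  have -> : - u = psign F p s *: br x (br r g).
    by apply/eqP; rewrite eq_sym -subr_eq0 opprK addrA (lsa_jacobi hx hr hg).
  by rewrite scalerA -expr2 psign_sqr scale1r.
by apply: (KZ); apply: (subspaceN hK).
Qed.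

Lemma brspan_graded_ideal : graded_ideal K.
Proof.
split; first exact: brspan_subspace.
split=> [|x y Ky]; first exact/brspan_graded/(proj1 (proj2 hR)).
have [x0 [x1 [h0 [h1 ->]]]] := lsa_decomp x.
have [_ [KD _]] := brspan_subspace R full.
by rewrite lsa_br_addl; apply: (KD); apply: brspan_ideal_hom Ky; eassumption.
Qed.

End BracketIdeal.
End LieSuperAlgebra.

Section Homomorphisms.
Variable F : fieldType.
Implicit Types L H Q : lieSuperAlg F.

Lemma is_hom0 L H (f : L -> H) : is_hom f -> f 0 = 0.
Proof. by case=> fD _; apply: (addrI (f 0)); rewrite -fD !addr0. Qed.

Lemma is_homB L H (f : L -> H) x y : is_hom f -> f (x - y) = f x - f y.
Proof. by case=> fD [fZ _]; rewrite fD -scaleN1r fZ scaleN1r. Qed.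

Lemma is_hom_comp L H Q (f : L -> H) (g : H -> Q) :
  is_hom f -> is_hom g -> is_hom (fun x => g (f x)).
Proof.
move=> [fD [fZ [fB fH]]] [gD [gZ [gB gH]]].
by do !split=> *; rewrite ?fD ?gD ?fZ ?gZ ?fB ?gB //; apply/gH/fH.
Qed.

Lemma ker_graded_ideal L H (f : L -> H) : is_hom f -> graded_ideal (fun x => f x = 0).
Proof.
move=> hf; have [fD [fZ [fB fH]]] := hf.
split.
  split; first exact: is_hom0.
  by split=> [x y fx fy | a x fx]; rewrite ?fD ?fZ fx ?fy ?addr0 ?scaler0.
split=> [x fx | x y fy]; last by rewrite fB fy lsa_br0r.
have [x0 [x1 [h0 [h1 ex]]]] := lsa_decomp x.
have [f0 f1] : f x0 = 0 /\ f x1 = 0.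
  by apply: (@lsa_hom_add_eq0 _ _ false true); [| exact: fH | exact: fH | rewrite -fD -ex].
by exists x0, x1.
Qed.

Lemma is_hom_surj_hom L H (f : L -> H) b y : is_hom f -> surj f ->
  lsa_hom H b y -> exists x, lsa_hom L b x /\ f x = y.
Proof.
move=> hf fs; have [fD [_ [_ fH]]] := hf.
have [x <-] := fs y => hy; have [xb [xc [hb [hc ex]]]] := lsa_decomp_parity b x.
have [fc _] : f xc = 0 /\ f xb - f x = 0.
  apply: (@lsa_hom_add_eq0 _ _ (~~ b) b); [by case: (b) | exact: fH | | ].
    by apply: lsa_homB => //; apply: fH.
  by rewrite ex fD addrA [f xc + _]addrC subrr.
by exists xb; rewrite ex fD fc addr0.
Qed.

Lemma is_hom_factor L H Q (g : L -> H) (h : L -> Q) :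
  is_hom g -> surj g -> is_hom h -> (forall x, g x = 0 -> h x = 0) ->
  exists k : H -> Q, is_hom k /\ forall x, k (g x) = h x.
Proof.
move=> hg gs hh ker_gh.
have hgE x y : g x = g y -> h x = h y.
  move=> gxy; apply/eqP; rewrite -subr_eq0 -is_homB //.
  by apply/eqP/ker_gh; rewrite is_homB // gxy subrr.
pose k z := h (projT1 (cid (gs z))).
have kE x : k (g x) = h x by apply: hgE; rewrite (projT2 (cid (gs (g x)))).
exists k; split=> //.
have [gD [gZ [gB _]]] := hg; have [hD [hZ [hB hH]]] := hh.
split=> [z1 z2|].
  by have [x1 <-] := gs z1; have [x2 <-] := gs z2; rewrite -gD !kE hD.
split=> [a z|]; first by have [x <-] := gs z; rewrite -gZ !kE hZ.
split=> [z1 z2|b z hz].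
  by have [x1 <-] := gs z1; have [x2 <-] := gs z2; rewrite -gB !kE hB.
by have [x [hx <-]] := is_hom_surj_hom hg gs hz; rewrite kE; apply: hH.
Qed.

Lemma free_lift (Fr : lieSuperAlg F) (X : Type) (par : X -> bool) (i : X -> Fr)
    H Q (f : H -> Q) (g : Fr -> Q) :
  is_free_on par i -> is_hom f -> surj f -> is_hom g ->
  exists phi : Fr -> H, is_hom phi /\ forall x, f (phi x) = g x.
Proof.
move=> [ipar univ] hf fs hg; have [_ [_ [_ gH]]] := hg.
have lift x : {h : H | lsa_hom H (par x) h /\ f h = g (i x)}.
  by apply: cid; apply: is_hom_surj_hom => //; apply/gH/ipar.
have [phi [hphi [phiE _]]] :=
  univ H (fun x => sval (lift x)) (fun x => proj1 (svalP (lift x))).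
have [g0 [_ [_ uniq]]] := univ Q (fun x => g (i x)) (fun x => gH _ _ (ipar x)).
have agree y : f (phi (i y)) = g (i y) by rewrite phiE (proj2 (svalP (lift y))).
exists phi; split=> // x.
by rewrite (uniq _ (is_hom_comp hphi hf) agree) (uniq _ hg (fun _ => erefl)).
Qed.

End Homomorphisms.

(** * Quotients by graded ideals *)

Definition subspace_pred (F : fieldType) (A : lieSuperAlg F) (J : A -> Prop)
  (hJ : subspace J) : {pred A} := fun x => `[< J x >].

Lemma subspace_pred_zmod_closed (F : fieldType) (A : lieSuperAlg F) (J : A -> Prop)
  (hJ : subspace J) : zmod_closed (subspace_pred hJ).
Proof.
split=> [|x y]; rewrite !unfold_in /subspace_pred; first by apply/asboolP; case: hJ.
by move=> /asboolP Jx /asboolP Jy; apply/asboolP; apply: subspaceB.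
Qed.

HB.instance Definition _ F A J hJ :=
  GRing.isZmodClosed.Build _ (@subspace_pred F A J hJ) (subspace_pred_zmod_closed hJ).

Definition quot_space (F : fieldType) (A : lieSuperAlg F) (J : A -> Prop)
  (hJ : graded_ideal J) : Type := {ideal_quot subspace_pred (proj1 hJ)}.

HB.instance Definition _ F A J hJ := GRing.Zmodule.on (@quot_space F A J hJ).

Section QuotientModule.
Variables (F : fieldType) (A : lieSuperAlg F) (J : A -> Prop) (hJ : graded_ideal J).
Local Notation Q := (quot_space hJ).

Definition quot_pi (x : A) : Q := \pi_{ideal_quot subspace_pred (proj1 hJ)} x.
Definition quot_repr (u : Q) : A := repr (u : {ideal_quot subspace_pred (proj1 hJ)}).

Lemma quot_reprK u : quot_pi (quot_repr u) = u.
Proof. exact: reprK. Qed.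

Lemma quot_piP x y : quot_pi x = quot_pi y <-> J (x - y).
Proof.
have := Quotient.idealrBE (subspace_pred (proj1 hJ)) x y.
rewrite unfold_in /subspace_pred => eJ.
by split=> [/eqP|Jxy]; [rewrite -eJ => /asboolP | apply/eqP; rewrite -eJ; apply/asboolP].
Qed.

Lemma quot_pi_repr x : J (x - quot_repr (quot_pi x)).
Proof. by apply/quot_piP; rewrite quot_reprK. Qed.

Lemma quot_piD x y : quot_pi (x + y) = quot_pi x + quot_pi y.
Proof. exact: Quotient.pi_add. Qed.

Lemma quot_pi0 : quot_pi 0 = 0.
Proof. exact: (raddf0 \pi_{ideal_quot subspace_pred (proj1 hJ)}). Qed.

Lemma quot_piN x : quot_pi (- x) = - quot_pi x.
Proof. exact: (raddfN \pi_{ideal_quot subspace_pred (proj1 hJ)}). Qed.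

Lemma quot_pi_eq0 x : quot_pi x = 0 <-> J x.
Proof. by rewrite -quot_pi0 quot_piP subr0. Qed.

Definition quot_scale (a : F) (u : Q) : Q := quot_pi (a *: quot_repr u).

Lemma quot_pi_scale a x : quot_pi (a *: x) = quot_scale a (quot_pi x).
Proof.
apply/quot_piP; rewrite -scalerBr; case: hJ => [[_ [_ JZ]] _].
exact/JZ/quot_pi_repr.
Qed.

Lemma quot_scaleA a b u : quot_scale a (quot_scale b u) = quot_scale (a * b) u.
Proof. by rewrite -[u]quot_reprK -!quot_pi_scale scalerA. Qed.

Lemma quot_scale1 : left_id 1 quot_scale.
Proof. by move=> u; rewrite -[u]quot_reprK -quot_pi_scale scale1r. Qed.

Lemma quot_scaleDr : right_distributive quot_scale +%R.
Proof.
move=> a u v; rewrite -[u]quot_reprK -[v]quot_reprK -quot_piD -!quot_pi_scale.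
by rewrite scalerDr quot_piD.
Qed.

Lemma quot_scaleDl u : {morph quot_scale^~ u : a b / a + b}.
Proof. by move=> a b; rewrite -[u]quot_reprK -!quot_pi_scale scalerDl quot_piD. Qed.

HB.instance Definition _ := GRing.Zmodule_isLmodule.Build F Q
  quot_scaleA quot_scale1 quot_scaleDr quot_scaleDl.

End QuotientModule.

Section QuotientBracket.
Variables (F : fieldType) (A : lieSuperAlg F) (J : A -> Prop) (hJ : graded_ideal J).
Local Notation Q := (quot_space hJ).
Local Notation pi := (@quot_pi F A J hJ).
Local Notation br := (lsa_br A).
Local Notation hom := (lsa_hom A).

Lemma quot_piZ a x : pi (a *: x) = a *: pi x.
Proof. exact: quot_pi_scale. Qed.

Definition quot_br (u v : Q) : Q := pi (br (quot_repr u) (quot_repr v)).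

Lemma quot_pi_br x y : pi (br x y) = quot_br (pi x) (pi y).
Proof.
apply/quot_piP; set x' := quot_repr (pi x); set y' := quot_repr (pi y).
have -> : br x y - br x' y' = br (x - x') y + br x' (y - y').
  by rewrite lsa_br_subl lsa_br_subr addrA subrK.
have [[_ [JD _]] [_ JI]] := hJ.
by apply: (JD); [apply: graded_ideal_brl hJ _ | apply: JI]; apply: quot_pi_repr.
Qed.

Definition quot_hom (b : bool) (u : Q) : Prop := exists x, hom b x /\ u = pi x.

Lemma quot_hom0 b : quot_hom b 0.
Proof. by exists 0; rewrite quot_pi0; split=> //; apply: lsa_hom0. Qed.

Lemma quot_homD b u v : quot_hom b u -> quot_hom b v -> quot_hom b (u + v).
Proof.
by move=> [x [hx ->]] [y [hy ->]]; exists (x + y); rewrite quot_piD; split=> //; apply: lsa_homD.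
Qed.

Lemma quot_homZ b a u : quot_hom b u -> quot_hom b (a *: u).
Proof.
by move=> [x [hx ->]]; exists (a *: x); rewrite quot_piZ; split=> //; apply: lsa_homZ.
Qed.

Lemma quot_decomp u :
  exists u0 u1, quot_hom false u0 /\ quot_hom true u1 /\ u = u0 + u1.
Proof.
rewrite -[u]quot_reprK; have [x0 [x1 [h0 [h1 ->]]]] := lsa_decomp (quot_repr u).
by exists (pi x0), (pi x1); rewrite quot_piD; do !split; [exists x0 | exists x1].
Qed.

Lemma quot_disj u : quot_hom false u -> quot_hom true u -> u = 0.
Proof.
move=> [x0 [h0 ->]] [x1 [h1 /quot_piP Jx]]; apply/quot_pi_eq0.
have [j0 [j1 [Jj0 [hj0 [Jj1 [hj1 ej]]]]]] := proj1 (proj2 hJ) _ Jx.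
have [x0j _] : x0 - j0 = 0 /\ - x1 - j1 = 0.
  apply: (@lsa_hom_add_eq0 _ _ false true); [by [] | exact: lsa_homB | | ].
    by apply: lsa_homB => //; apply: lsa_homN.
  by rewrite addrACA -opprD -ej subrr.
by rewrite -(subrK j0 x0) x0j add0r.
Qed.

Lemma quot_brDl a u v w : quot_br (a *: u + v) w = a *: quot_br u w + quot_br v w.
Proof.
rewrite -[u]quot_reprK -[v]quot_reprK -[w]quot_reprK -quot_piZ -quot_piD -!quot_pi_br.
by rewrite lsa_brDl quot_piD quot_piZ.
Qed.

Lemma quot_brDr a u v w : quot_br u (a *: v + w) = a *: quot_br u v + quot_br u w.
Proof.
rewrite -[u]quot_reprK -[v]quot_reprK -[w]quot_reprK -quot_piZ -quot_piD -!quot_pi_br.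
by rewrite lsa_brDr quot_piD quot_piZ.
Qed.

Lemma quot_br_hom p q u v :
  quot_hom p u -> quot_hom q v -> quot_hom (addb p q) (quot_br u v).
Proof.
move=> [x [hx ->]] [y [hy ->]]; exists (br x y).
by rewrite quot_pi_br; split=> //; apply: lsa_br_hom.
Qed.

Lemma quot_antisym p q u v : quot_hom p u -> quot_hom q v ->
  quot_br u v = - (psign F p q *: quot_br v u).
Proof.
move=> [x [hx ->]] [y [hy ->]].
by rewrite -!quot_pi_br (lsa_antisym hx hy) quot_piN quot_piZ.
Qed.

Lemma quot_jacobi p q r u v w : quot_hom p u -> quot_hom q v -> quot_hom r w ->
  psign F p r *: quot_br u (quot_br v w) + psign F q p *: quot_br v (quot_br w u)
  + psign F r q *: quot_br w (quot_br u v) = 0.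
Proof.
move=> [x [hx ->]] [y [hy ->]] [z [hz ->]].
by rewrite -!quot_pi_br -!quot_piZ -!quot_piD (lsa_jacobi hx hy hz) quot_pi0.
Qed.

Definition quot_lsa : lieSuperAlg F :=
  LieSuperAlg quot_hom0 quot_homD quot_homZ quot_decomp quot_disj quot_brDl quot_brDr
    quot_br_hom quot_antisym quot_jacobi.

Lemma quot_pi_hom : is_hom (pi : A -> quot_lsa).
Proof.
split; first exact: quot_piD.
split; first exact: quot_piZ.
by split=> [x y | b x hx]; [apply: quot_pi_br | exists x].
Qed.

Lemma quot_pi_surj : surj (pi : A -> quot_lsa).
Proof. by move=> u; exists (quot_repr u); apply: quot_reprK. Qed.

Lemma quot_pi_center x : center (pi x : quot_lsa) <-> forall y, J (br x y).
Proof.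
split=> [cx y | Jx u]; first by apply/quot_pi_eq0; rewrite quot_pi_br; apply: cx.
by rewrite -[u]quot_reprK /= -quot_pi_br; apply/quot_pi_eq0.
Qed.

End QuotientBracket.

Lemma quot_center_capable (F : fieldType) (H : lieSuperAlg F) :
  capable (quot_lsa (center_graded_ideal H)).
Proof.
exists H, (quot_pi (center_graded_ideal H)); split; first exact: quot_pi_hom.
by split; [apply: quot_pi_surj | move=> h; apply: quot_pi_eq0].
Qed.

(** * The epicenter and the Schur multiplier *)

Lemma schur_sigma_injectiveP (F : fieldType) (Fr : lieSuperAlg F) (R S : Fr -> Prop) :
  subspace R -> (forall s y, S s -> R (lsa_br Fr s y)) ->
  schur_sigma_injective R S <->
  (forall x, brspan S (fun _ => True) x -> brspan R (fun _ => True) x).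
Proof.
move=> hR SR; split=> [inj x Sx | incl Fr' x y _ _ _ _ /incl //].
have Fr'x : brspan (fun _ => True) (fun _ => True) x.
  by apply: (brspan_ind (brspan_subspace _ _)) Sx => a b _ _; apply: brspan_br.
rewrite -[x]subr0; apply: inj; rewrite ?subr0 //.
- by apply: (brspan_ind hR) Sx => a b Sa _; apply: SR.
- by case: hR.
- by case: (brspan_subspace (fun _ : Fr => True) (fun _ => True)).
Qed.

Section Epicenter.
Variables (F : fieldType) (L Fr : lieSuperAlg F) (pi : Fr -> L).
Hypotheses (hpi : is_hom pi) (pi_surj : surj pi).
Local Notation R := (fun x => pi x = 0).
Local Notation K := (brspan R (fun _ => True)).

Lemma epicenter_brspan s y : epicenter (pi s) -> K (lsa_br Fr s y).
Proof.
move=> Zs; have hK := brspan_graded_ideal (ker_graded_ideal hpi).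
pose H := quot_lsa hK; pose hZ := center_graded_ideal H.
pose c : Fr -> H := quot_pi hK; pose q : H -> quot_lsa hZ := quot_pi hZ.
have cR r : pi r = 0 -> q (c r) = 0.
  by move=> r0; apply/quot_pi_eq0/quot_pi_center => z; apply: brspan_br.
have [p [hp pE]] :=
  is_hom_factor hpi pi_surj (is_hom_comp (quot_pi_hom hK) (quot_pi_hom hZ)) cR.
have p_surj : surj p.
  move=> u; have [h <-] := quot_pi_surj u; have [x <-] := quot_pi_surj h.
  by exists (pi x); apply: pE.
have : p (pi s) = 0.
  apply: Zs (ker_graded_ideal hp) _.
  exists (quot_lsa hZ), p; do 2!split=> //.
  by split=> [x|]; [apply: iff_refl | apply: quot_center_capable].
by rewrite pE => /quot_pi_eq0 /quot_pi_center; apply.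
Qed.

Lemma brspan_epicenter (X : Type) (par : X -> bool) (i : X -> Fr) s :
  is_free_on par i -> (forall y, K (lsa_br Fr s y)) -> epicenter (pi s).
Proof.
move=> hfree Ks I _ [Q [p [hp [p_surj [p_ker [H [f [hf [f_surj f_ker]]]]]]]]].
have [phi [hphi fphi]] := free_lift hfree hf f_surj (is_hom_comp hpi hp).
have [_ [_ [phiB _]]] := hphi.
have phiK x : K x -> phi x = 0.
  apply: (brspan_ind (proj1 (ker_graded_ideal hphi))) => r y r0 _.
  have phir : center (phi r) by apply/f_ker; rewrite fphi r0 (is_hom0 hp).
  by rewrite phiB phir.
(* H = phi(Fr) + Z(H), since f o phi = p o pi is onto and f has kernel Z(H) *)
have cover h : exists x, center (h - phi x).
  have [l fh] := p_surj (f h); have [x xl] := pi_surj l.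
  by exists x; apply/f_ker; rewrite (is_homB _ _ hf) fphi xl fh subrr.
have cs : center (phi s).
  move=> h; have [x cx] := cover h.
  by rewrite -(subrK (phi x) h) lsa_br_addr (lsa_br_centerr _ cx) add0r -phiB phiK.
by apply/p_ker; rewrite -fphi; apply/f_ker.
Qed.

Lemma epicenterP (X : Type) (par : X -> bool) (i : X -> Fr) s :
  is_free_on par i -> epicenter (pi s) <-> forall y, K (lsa_br Fr s y).
Proof.
by move=> hfree; split=> [Zs y | Ks]; [apply: epicenter_brspan | apply: brspan_epicenter hfree Ks].
Qed.

End Epicenter.

Theorem mainTheorem14 (F : fieldType)
  (hF2 : ~~ (2%N \in [pchar F])) (hF3 : ~~ (3%N \in [pchar F]))
  (L : lieSuperAlg F) (N : L -> Prop)
  (hN : graded_ideal N) (hNcentral : forall n, N n -> center n)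
  (Fr : lieSuperAlg F) (X : Type) (par : X -> bool) (i : X -> Fr) (pi : Fr -> L)
  (hfree : is_free_on par i) (hpi : is_hom pi) (hpis : surj pi) :
  (forall x, N x -> epicenter x) <->
  schur_sigma_injective (fun x => pi x = 0) (fun x => N (pi x)).
Proof.
have [_ [_ [piB _]]] := hpi.
have SR s y : N (pi s) -> pi (lsa_br Fr s y) = 0.
  by move=> Ns; rewrite piB (hNcentral _ Ns).
apply: iff_sym; apply: (iff_trans (schur_sigma_injectiveP (ker_graded_ideal hpi).1 SR)).
split=> [incl n Nn | NZ].
  have [s esn] := hpis n; rewrite -esn in Nn *.
  by apply/(epicenterP hpi hpis _ hfree) => y; apply: incl; apply: brspan_br.
apply: (brspan_ind (brspan_subspace _ _)) => s y Ns _.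
by move/NZ: Ns => /(epicenterP hpi hpis _ hfree); apply.
Qed.
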